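(* Let $\Delta$ be a matroid complex on $[n]$ and $I=I_\Delta\subset S$. Then for every integer $m\ge 1$, the symbolic power $I^{(m)}$ is $0$-clean.
   Context: $S=K[x_1,\dots,x_n]$, $K$ a field. $I_\Delta$ is the Stanley–Reisner ideal of $\Delta$, generated by $\prod_{i\in F}x_i$ for $F\subseteq[n]$, $F\notin\Delta$. A matroid complex is a simplicial complex whose faces are the independent sets of a matroid on its vertex set. If $\Delta$ has facets $F_1,\dots,F_t$, then $I_\Delta=\bigcap_{i=1}^t P_{F_i^c}$ with $P_{F^c}=(x_j:j\notin F)$, and the $m$-th symbolic power is $I_\Delta^{(m)}=\bigcap_{i=1}^t P_{F_i^c}^m$. For a monomial $u=x_1^{a_1}\cdots x_n^{a_n}$, $\mathrm{supp}(u)=\{i:a_i>0\}$. For an ideal $I$, $\min(I)$ is the set of minimal primes of $I$. A monomial $u\neq 1$ with $u\notin I$ is a cleaner monomial of $I$ if $\min(I+Su)\subseteq\min(I)$. For $k\ge 0$, the class of $k$-clean monomial ideals is defined recursively (smallest class closed under the rule): a proper monomial ideal $I$ is $k$-clean if either $I$ is prime, or $I$ has no embedded primes and there is a cleaner monomial $u$ of $I$ with $|\mathrm{supp}(u)|\le k+1$ such that $I:u$ and $I+Su$ are $k$-clean. *)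

(* Monomial ideals of S = K[x_1..x_n] are encoded by the
   (upward-closed) sets of monomials they contain; a monomial
   x_1^{a_1}...x_n^{a_n} is its exponent vector in {ffun 'I_n -> nat}. *)
From mathcomp Require Import all_boot.
Set Implicit Arguments. Unset Strict Implicit. Unset Printing Implicit Defensive.

Definition mon (n : nat) := {ffun 'I_n -> nat}.

Definition mon1 (n : nat) : mon n := [ffun => 0%N].
Definition mmul (n : nat) (u v : mon n) : mon n := [ffun i => u i + v i].
Definition mdvd (n : nat) (u v : mon n) : Prop := forall i, u i <= v i.
Definition supp (n : nat) (u : mon n) : {set 'I_n} := [set i | 0 < u i].

Definition mideal (n : nat) := mon n -> Prop.
Definition is_mideal (n : nat) (I : mideal n) : Prop :=
  forall u v, I u -> mdvd u v -> I v.
Definition proper (n : nat) (I : mideal n) : Prop := ~ I (mon1 n).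
Definition msubset (n : nat) (I J : mideal n) : Prop := forall u, I u -> J u.

Definition colon (n : nat) (I : mideal n) (u : mon n) : mideal n :=
  fun v => I (mmul u v).
Definition addm (n : nat) (I : mideal n) (u : mon n) : mideal n :=
  fun v => I v \/ mdvd u v.

Definition mprime (n : nat) (I : mideal n) : Prop :=
  is_mideal I /\ proper I /\ forall u v, I (mmul u v) -> I u \/ I v.

Definition minprime (n : nat) (I P : mideal n) : Prop :=
  mprime P /\ msubset I P /\
  forall Q, mprime Q -> msubset I Q -> msubset Q P -> msubset P Q.

Definition assprime (n : nat) (I P : mideal n) : Prop :=
  mprime P /\ exists u : mon n, forall v, P v <-> colon I u v.

Definition no_embedded (n : nat) (I : mideal n) : Prop :=
  forall P, assprime I P -> minprime I P.

Definition cleaner (n : nat) (I : mideal n) (u : mon n) : Prop :=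
  u <> mon1 n /\ ~ I u /\ forall P, minprime (addm I u) P -> minprime I P.

Inductive kclean (k : nat) (n : nat) : mideal n -> Prop :=
| kclean_prime (I : mideal n) : mprime I -> kclean k I
| kclean_step (I : mideal n) (u : mon n) :
    is_mideal I -> proper I -> no_embedded I -> cleaner I u ->
    #|supp u| <= k.+1 ->
    kclean k (colon I u) -> kclean k (addm I u) -> kclean k I.

Definition matroid_complex (n : nat) (D : {set {set 'I_n}}) : Prop :=
  set0 \in D /\
  (forall A B : {set 'I_n}, B \in D -> A \subset B -> A \in D) /\
  (forall A B : {set 'I_n}, A \in D -> B \in D -> #|A| < #|B| ->
     exists2 x, x \in B :\: A & x |: A \in D).

Definition facet (n : nat) (D : {set {set 'I_n}}) (F : {set 'I_n}) : bool :=
  (F \in D) && [forall G in D, (F \subset G) ==> (G == F)].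

Definition SR_ideal (n : nat) (D : {set {set 'I_n}}) : mideal n :=
  fun u => exists F : {set 'I_n}, F \notin D /\ F \subset supp u.

(* u in P_A^m  iff  \sum_{i in A} u_i >= m *)
Definition in_primepow (n : nat) (A : {set 'I_n}) (m : nat) (u : mon n) : Prop :=
  m <= \sum_(i in A) u i.

Definition symb_power (n : nat) (D : {set {set 'I_n}}) (m : nat) : mideal n :=
  fun u => forall F : {set 'I_n}, facet D F -> in_primepow (~: F) m u.

From Pilot Require Import Defs.
From mathcomp Require Import all_boot.
From Stdlib Require Import Classical FunctionalExtensionality PropExtensionality ClassicalEpsilon.
Set Implicit Arguments. Unset Strict Implicit. Unset Printing Implicit Defensive.

(* Over the facets F of the matroid complex, I^(m) is the intersection of the
   P_{F^c}^m.  The complements of the facets are the bases of the dual matroid,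
   so they satisfy the basis exchange axiom, and we prove 0-cleanness for the
   larger class of ideals
     J(DD, C, w) = (x_c : c in C) + \bigcap_{D in DD} P_D^{m - w(D)},
   where DD is an equicardinal family with the exchange property whose members
   all contain C, and w(D) = \sum_{i in D} w_i for a weight w; this class is
   closed under colon by a variable, since J : x_j = J(DD, C, w + e_j).
   The minimal primes of J are the P_D with w(D) < m, and every associated prime
   J : u is again of the form J(DD, C, w'), hence one of those primes.
   Choose j outside C lying in some D, with w_j minimal.  The exchange property
   gives J + (x_j) = J({D in DD | j in D}, C + j, w), whose minimal primes are
   minimal primes of J, so x_j is a cleaner monomial (or x_j lies in J, and
   J = J + (x_j)).  Induction on \sum_D (m - w(D))_+ + |[n] \ C| ends when
   every D equals C, and then J = P_C is prime. *)

Section MonomialIdeals.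

Variable n : nat.
Implicit Types (u v w f : mon n) (I J P Q : mideal n) (A B C T D : {set 'I_n}).

Lemma mideal_ext I J : (forall v, I v <-> J v) -> I = J.
Proof.
by move=> IJ; apply: functional_extensionality => v; apply: propositional_extensionality.
Qed.

Lemma mmulm1 u : mmul u (mon1 n) = u.
Proof. by apply/ffunP => i; rewrite !ffunE addn0. Qed.

Lemma mmul1m u : mmul (mon1 n) u = u.
Proof. by apply/ffunP => i; rewrite !ffunE. Qed.

Lemma mdvd_mmul2r u v w : mdvd u v -> mdvd (mmul u w) (mmul v w).
Proof. by move=> uv i; rewrite !ffunE leq_add2r. Qed.

Lemma addm_id I u : is_mideal I -> I u -> addm I u = I.
Proof. by move=> Iid Iu; apply: mideal_ext => v; split=> [[//|/(Iid _ _ Iu)]|]; last left. Qed.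

Definition mvar (i : 'I_n) : mon n := [ffun k => nat_of_bool (k == i)].

Lemma mvarE i k : mvar i k = (k == i).
Proof. by rewrite ffunE. Qed.

Lemma mdvd_mvar i v : mdvd (mvar i) v <-> 0 < v i.
Proof.
split=> [/(_ i)|vi k]; first by rewrite mvarE eqxx.
by rewrite mvarE; case: eqP => [->|].
Qed.

Lemma mvar_neq1 i : mvar i <> mon1 n.
Proof. by move/ffunP/(_ i); rewrite mvarE eqxx ffunE. Qed.

Lemma supp_mvar i : supp (mvar i) = [set i].
Proof. by apply/setP => k; rewrite !inE mvarE; case: eqP. Qed.

Definition deg_on A v := \sum_(i in A) v i.

Lemma deg_onM A u v : deg_on A (mmul u v) = deg_on A u + deg_on A v.
Proof. by rewrite /deg_on -big_split; apply: eq_bigr => i _; rewrite ffunE. Qed.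

Lemma deg_on_mvar A i : deg_on A (mvar i) = (i \in A).
Proof.
rewrite /deg_on; case: (boolP (i \in A)) => iA.
  rewrite (bigD1 i) //= mvarE eqxx big1 // => k /andP[_ /negbTE ki].
  by rewrite mvarE ki.
by rewrite big1 // => k kA; rewrite mvarE; case: eqP => // ki; rewrite -ki kA in iA.
Qed.

Lemma leq_deg_on A v i : i \in A -> v i <= deg_on A v.
Proof. by move=> iA; rewrite /deg_on (bigD1 i) //= leq_addr. Qed.

Lemma deg_on_mono A u v : mdvd u v -> deg_on A u <= deg_on A v.
Proof. by move=> uv; apply: leq_sum => i _. Qed.

Lemma deg_on_exchange f D x y : x \in D -> y \notin D -> f y <= f x ->
  deg_on (y |: (D :\ x)) f <= deg_on D f.
Proof.
move=> xD yD fyx; have yDx : y \notin D :\ x by rewrite !inE (negbTE yD) andbF.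
by rewrite /deg_on big_setU1 //= [X in _ <= X](big_setD1 x xD) leq_add2r.
Qed.

Definition var_ideal T : mideal n := fun v => [exists i in T, 0 < v i].

Lemma var_ideal_prime T : mprime (var_ideal T).
Proof.
split; [|split].
- move=> u v /exists_inP[i iT ui] uv; apply/exists_inP; exists i => //.
  exact: leq_trans ui (uv i).
- by move=> /exists_inP[i _]; rewrite ffunE.
- move=> u v /exists_inP[i iT]; rewrite ffunE addn_gt0 => /orP[ui|vi].
  + by left; apply/exists_inP; exists i.
  + by right; apply/exists_inP; exists i.
Qed.

Lemma var_ideal_mvar T i : var_ideal T (mvar i) <-> i \in T.
Proof.
split=> [/exists_inP[k kT]|iT]; last by apply/exists_inP; exists i; rewrite ?mvarE ?eqxx.
by rewrite mvarE; case: eqP => // <-.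
Qed.

Lemma var_ideal_subset A B : msubset (var_ideal A) (var_ideal B) <-> A \subset B.
Proof.
split=> [AB|/subsetP AB v /exists_inP[i iA vi]].
  by apply/subsetP => i /var_ideal_mvar/AB/var_ideal_mvar.
by apply/exists_inP; exists i; first exact: AB.
Qed.

Lemma deg_on_eq0 T v : ~ var_ideal T v -> deg_on T v = 0.
Proof.
move=> Tv; apply/eqP; rewrite /deg_on sum_nat_eq0; apply/forall_inP => i iT.
by rewrite -leqn0 leqNgt; apply: contra_notN Tv => vi; apply/exists_inP; exists i.
Qed.

Lemma mprime_mvar P v : mprime P -> P v -> exists2 i, P (mvar i) & 0 < v i.
Proof.
move=> [_ [P1 Pmul]]; have [d] := ubnP (deg_on setT v).
elim: d v => // d IHd v deg_v Pv.
have [i vi|v0] := pickP (fun i => 0 < v i); last first.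
  case: P1; suff -> : mon1 n = v by [].
  by apply/ffunP => i; rewrite ffunE; move: (v0 i) => /= /negbT; rewrite -eqn0Ngt => /eqP.
pose v' : mon n := [ffun k => v k - (k == i)].
have vE : v = mmul (mvar i) v'.
  apply/ffunP => k; rewrite !ffunE; case: eqP => [->|_] /=; last by rewrite subn0.
  by rewrite add1n subn1 prednK.
move: Pv; rewrite {1}vE => /Pmul [Pi|Pv']; first by exists i.
have [|k Pk v'k] := IHd v' _ Pv'.
  by move: deg_v; rewrite vE deg_onM deg_on_mvar in_setT add1n ltnS.
by exists k => //; apply: leq_trans v'k _; rewrite ffunE leq_subr.
Qed.

Lemma mprime_var_ideal P : mprime P -> exists T, P = var_ideal T.
Proof.
move=> Pp.
pose inP i := if excluded_middle_informative (P (mvar i)) then true else false.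
have inPE i : inP i <-> P (mvar i) by rewrite /inP; case: excluded_middle_informative.
exists [set i | inP i]; apply: mideal_ext => v; split.
  by move=> /(mprime_mvar Pp) [i Pi vi]; apply/exists_inP; exists i; rewrite ?inE ?inPE.
move=> /exists_inP[i]; rewrite inE => /inPE Pi vi.
by case: Pp => [Pid _]; apply: Pid Pi _; apply/mdvd_mvar.
Qed.

Definition exchange_system (DD : {set {set 'I_n}}) C : Prop :=
  [/\ {in DD &, forall D1 D2, #|D1| = #|D2|},
      {in DD, forall D, C \subset D} &
      {in DD &, forall D1 D2 y, y \in D2 :\: D1 ->
         exists2 x, x \in D1 :\: D2 & y |: (D1 :\ x) \in DD}].

Definition sym_ideal (DD : {set {set 'I_n}}) C w m : mideal n :=
  fun v => var_ideal C v \/ [forall D in DD, m <= deg_on D (mmul v w)].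

Section SymIdeal.

Variables (DD : {set {set 'I_n}}) (C : {set 'I_n}) (m : nat).
Hypothesis DDex : exchange_system DD C.

Lemma sym_ideal_mideal w : is_mideal (sym_ideal DD C w m).
Proof.
move=> u v [Cu | /forall_inP muD] uv.
  by left; apply: (proj1 (var_ideal_prime C)) Cu uv.
right; apply/forall_inP => D /muD /leq_trans; apply.
exact/deg_on_mono/mdvd_mmul2r.
Qed.

Lemma sym_idealPn w v : ~ sym_ideal DD C w m v ->
  exists2 D, D \in DD & deg_on D (mmul v w) < m.
Proof.
move=> Iv; have /forall_inPn[D DD_D] : ~~ [forall D in DD, m <= deg_on D (mmul v w)].
  by apply/negP => mvD; apply: Iv; right.
by exists D; rewrite // ltnNge.
Qed.

Lemma proper_sym_ideal w :
  Defs.proper (sym_ideal DD C w m) <-> exists2 D, D \in DD & deg_on D w < m.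
Proof.
split=> [/sym_idealPn|[D DD_D wD] [/exists_inP[c _]|/forall_inP/(_ D DD_D)]].
- by rewrite mmul1m.
- by rewrite ffunE.
- by rewrite mmul1m leqNgt wD.
Qed.

Lemma sym_ideal_sub_var_ideal w D : D \in DD -> deg_on D w < m ->
  msubset (sym_ideal DD C w m) (var_ideal D).
Proof.
have [_ sub_C _] := DDex.
move=> DD_D wD v [Cv|/forall_inP/(_ D DD_D)].
  exact: (proj2 (var_ideal_subset C D) (sub_C D DD_D)).
rewrite deg_onM; have [//|Dv] := classic (var_ideal D v).
by rewrite deg_on_eq0 // add0n leqNgt wD.
Qed.

Lemma var_ideal_over_sym_ideal w T : msubset (sym_ideal DD C w m) (var_ideal T) ->
  exists2 D, D \in DD & deg_on D w < m /\ D \subset T.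
Proof.
pose vT : mon n := [ffun i => if i \in T then 0 else m].
move=> IT; have /sym_idealPn[D DD_D vTwD] : ~ sym_ideal DD C w m vT.
  by move=> /IT /exists_inP[i iT]; rewrite ffunE iT.
exists D => //; split.
  by apply: leq_ltn_trans vTwD; rewrite deg_onM leq_addl.
apply/subsetP => i iD; apply: contraTT vTwD => iT; rewrite -leqNgt.
by apply: leq_trans (leq_deg_on _ iD); rewrite !ffunE (negbTE iT) leq_addr.
Qed.

Lemma prime_over_sym_ideal w Q : mprime Q -> msubset (sym_ideal DD C w m) Q ->
  exists2 D, D \in DD & deg_on D w < m /\ msubset (var_ideal D) Q.
Proof.
move=> /mprime_var_ideal[T ->] /var_ideal_over_sym_ideal[D DD_D [wD DT]].
by exists D => //; split => //; apply/var_ideal_subset.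
Qed.

Lemma minprime_sym_idealP w P : minprime (sym_ideal DD C w m) P <->
  exists2 D, D \in DD & deg_on D w < m /\ P = var_ideal D.
Proof.
split=> [[Pp [IP Pmin]] | [D DD_D [wD ->]]].
  have [D DD_D [wD DP]] := prime_over_sym_ideal Pp IP.
  exists D => //; split => //; apply: mideal_ext => v; split; last exact: DP.
  exact: Pmin _ (var_ideal_prime D) (sym_ideal_sub_var_ideal DD_D wD) DP v.
split; [exact: var_ideal_prime | split; first exact: sym_ideal_sub_var_ideal].
move=> Q Qp IQ QD; have [D' DD_D' [_ D'Q]] := prime_over_sym_ideal Qp IQ.
suff <- : D' = D by [].
have D'D : D' \subset D by apply/var_ideal_subset => v /D'Q /QD.
have [card_eq _ _] := DDex.
by apply/eqP; rewrite eqEcard D'D (card_eq _ _ DD_D DD_D') leqnn.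
Qed.

Lemma colon_sym_ideal w u : {in C, forall c, u c = 0} ->
  colon (sym_ideal DD C w m) u = sym_ideal DD C (mmul u w) m.
Proof.
move=> u0; apply: mideal_ext => v; rewrite /colon /sym_ideal /var_ideal.
have -> : [exists c in C, 0 < mmul u v c] = [exists c in C, 0 < v c].
  by apply: eq_existsb => c; case: (boolP (c \in C)) => //= cC; rewrite ffunE u0.
have -> : mmul (mmul u v) w = mmul v (mmul u w).
  by apply/ffunP => i; rewrite !ffunE -addnA addnCA.
exact: iff_refl.
Qed.

Lemma sym_ideal_no_embedded w : no_embedded (sym_ideal DD C w m).
Proof.
move=> P [Pp [u Pu]].
have uI : ~ sym_ideal DD C w m u.
  by move=> Iu; case: Pp => [_ [P1 _]]; apply/P1/Pu; rewrite /colon mmulm1.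
have u0 : {in C, forall c, u c = 0}.
  move=> c cC; apply/eqP; rewrite -leqn0 leqNgt; apply/negP => uc.
  by apply: uI; left; apply/exists_inP; exists c.
have PE : P = sym_ideal DD C (mmul u w) m.
  by rewrite -colon_sym_ideal //; apply: mideal_ext.
have IP : msubset (sym_ideal DD C (mmul u w) m) P by rewrite PE.
have [D DD_D [uwD DP]] := prime_over_sym_ideal Pp IP.
apply/minprime_sym_idealP; exists D => //; split.
  by apply: leq_ltn_trans uwD; rewrite deg_onM leq_addl.
apply: mideal_ext => v; split; last exact: DP.
by rewrite PE; apply: sym_ideal_sub_var_ideal.
Qed.

End SymIdeal.

Lemma exchange_systemU1 DD C j :
  exchange_system DD C -> exchange_system [set D in DD | j \in D] (j |: C).
Proof.
move=> [card_eq sub_C exch]; split.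
- by move=> D1 D2; rewrite !inE => /andP[DD1 _] /andP[DD2 _]; apply: card_eq.
- by move=> D; rewrite inE => /andP[DD_D jD]; rewrite subUset sub1set jD sub_C.
- move=> D1 D2; rewrite !inE => /andP[DD1 jD1] /andP[DD2 jD2] y yD.
  have [x xD DD'] := exch _ _ DD1 DD2 y yD; exists x => //.
  rewrite inE DD' !inE jD1 andbT; apply/orP; right.
  by apply: contraTneq xD => <-; rewrite inE jD2.
Qed.

Definition free_vars (DD : {set {set 'I_n}}) C := (\bigcup_(D in DD) D) :\: C.

Definition sym_measure (DD : {set {set 'I_n}}) C w m :=
  \sum_(D in DD) (m - deg_on D w) + #|~: C|.

Lemma sym_ideal_eq_var_ideal DD C w m : exchange_system DD C ->
  free_vars DD C = set0 -> Defs.proper (sym_ideal DD C w m) ->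
  sym_ideal DD C w m = var_ideal C.
Proof.
move=> DDex free0 /proper_sym_ideal[D DD_D wD].
have DC : D \subset C.
  apply/subsetP => i iD; apply: contraT => iC.
  have : i \in free_vars DD C by rewrite inE iC; apply/bigcupP; exists D.
  by rewrite free0 inE.
apply: mideal_ext => v; split=> [/(sym_ideal_sub_var_ideal DDex DD_D wD)|]; last by left.
exact: (proj2 (var_ideal_subset D C) DC).
Qed.

Section FreeVariable.

Variables (DD : {set {set 'I_n}}) (C : {set 'I_n}) (w : mon n) (m : nat) (j : 'I_n).
Hypotheses (DDex : exchange_system DD C) (j_free : j \in free_vars DD C).
Hypothesis j_min : {in free_vars DD C, forall x, w j <= w x}.

Lemma exchange_free D : D \in DD -> j \notin D ->
  exists2 x, x \in free_vars DD C & x \in D /\ j |: (D :\ x) \in DD.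
Proof.
have [_ sub_C exch] := DDex.
move: j_free; rewrite inE => /andP[jC /bigcupP[D2 DD2 jD2]] DD_D jD.
have [|x] := exch _ _ DD_D DD2 j; first by rewrite inE jD jD2.
rewrite inE => /andP[xD2 xD] DD'; exists x => //.
rewrite inE; apply/andP; split; last by apply/bigcupP; exists D.
by apply: contra xD2 => xC; apply: subsetP (sub_C _ DD2) x xC.
Qed.

Lemma member_with_le_deg D0 : D0 \in DD ->
  exists2 D, D \in [set D in DD | j \in D] & deg_on D w <= deg_on D0 w.
Proof.
move=> DD0; have [jD0|jD0] := boolP (j \in D0); first by exists D0; rewrite // inE DD0.
have [x x_free [xD0 DD']] := exchange_free DD0 jD0.
exists (j |: (D0 :\ x)); first by rewrite inE DD' setU11.
exact: deg_on_exchange xD0 jD0 (j_min x_free).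
Qed.

Lemma addm_sym_ideal : addm (sym_ideal DD C w m) (mvar j) =
  sym_ideal [set D in DD | j \in D] (j |: C) w m.
Proof.
apply: mideal_ext => v; rewrite /addm mdvd_mvar /sym_ideal; split.
  case=> [[Cv | /forall_inP Iv] | vj]; [left | right | left].
  - exact: (proj2 (var_ideal_subset _ _) (subsetUr [set j] C)).
  - by apply/forall_inP => D; rewrite inE => /andP[/Iv].
  - by apply/exists_inP; exists j; rewrite ?setU11.
case=> [/exists_inP[c] | /forall_inP Ijv].
  rewrite in_setU1 => /orP[/eqP-> vj|cC vc]; first by right.
  by left; left; apply/exists_inP; exists c.
have [vj0|vj] := posnP (v j); last by right.
left; right; apply/forall_inP => D DD_D.
have [jD|jD] := boolP (j \in D); first by apply: Ijv; rewrite inE DD_D.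
have [x x_free [xD DD']] := exchange_free DD_D jD.
apply: leq_trans (Ijv _ _) (deg_on_exchange xD jD _); first by rewrite inE DD' setU11.
by rewrite !ffunE vj0 (leq_trans (j_min x_free)) // leq_addl.
Qed.

Lemma sym_measureU1 :
  sym_measure [set D in DD | j \in D] (j |: C) w m < sym_measure DD C w m.
Proof.
have jC : j \notin C by move: j_free; rewrite inE => /andP[].
rewrite /sym_measure -addnS leq_add //.
  by rewrite big_set /= [X in _ <= X](bigID (fun D : {set 'I_n} => j \in D)) /= leq_addr.
by apply: proper_card; rewrite properC properEcard subsetUr cardsU1 jC andTb addnC addn1.
Qed.

Lemma sym_measure_colon : Defs.proper (sym_ideal DD C (mmul (mvar j) w) m) ->
  sym_measure DD C (mmul (mvar j) w) m < sym_measure DD C w m.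
Proof.
move=> /proper_sym_ideal[D0 DD0 jwD0].
have [D] := member_with_le_deg DD0; rewrite inE => /andP[DD_D jD] wD.
have wD_lt : deg_on D w < m.
  by apply: leq_ltn_trans wD (leq_ltn_trans _ jwD0); rewrite deg_onM leq_addl.
rewrite /sym_measure ltn_add2r (bigD1 D DD_D) [X in _ < X](bigD1 D DD_D) /=.
rewrite -addSn leq_add //.
  by rewrite deg_onM deg_on_mvar jD addnC addn1 subnSK.
by apply: leq_sum => D' _; rewrite deg_onM leq_sub2l // leq_addl.
Qed.

End FreeVariable.

Lemma kclean_sym_ideal DD C w m : exchange_system DD C ->
  Defs.proper (sym_ideal DD C w m) -> kclean 0 (sym_ideal DD C w m).
Proof.
have [N] := ubnP (sym_measure DD C w m); elim: N DD C w => // N IHN DD C w ltN DDex Ip.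
have [free0|[j0 j0_free]] := set_0Vmem (free_vars DD C).
  by rewrite sym_ideal_eq_var_ideal //; apply/kclean_prime/var_ideal_prime.
have [j j_free j_min] := arg_minnP w j0_free.
have {}j_free : j \in free_vars DD C := j_free.
have {}j_min : {in free_vars DD C, forall x, w j <= w x} := j_min.
have jC : j \notin C by move: j_free; rewrite inE => /andP[].
have addmE := addm_sym_ideal m DDex j_free j_min.
have kclean_addm : kclean 0 (addm (sym_ideal DD C w m) (mvar j)).
  rewrite addmE; apply: IHN; first exact: leq_trans (sym_measureU1 w m j_free) ltN.
    exact: exchange_systemU1.
  have [D0 DD0 wD0] := proj1 (proper_sym_ideal _ _ _ _) Ip.
  have [D DDj_D wD] := member_with_le_deg DDex j_free j_min DD0.
  by apply/proper_sym_ideal; exists D => //; apply: leq_ltn_trans wD0.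
have [Ij|Ij] := classic (sym_ideal DD C w m (mvar j)).
  by rewrite -(addm_id (@sym_ideal_mideal DD C m w) Ij).
have mvar_j_C : {in C, forall c, mvar j c = 0}.
  by move=> c cC; rewrite mvarE; case: eqP => // cj; rewrite -cj cC in jC.
have colon_proper : Defs.proper (sym_ideal DD C (mmul (mvar j) w) m).
  by rewrite -colon_sym_ideal // /Defs.proper /colon mmulm1.
apply: (@kclean_step _ _ _ (mvar j)) => //.
- exact: sym_ideal_mideal.
- exact: sym_ideal_no_embedded.
- split; [exact: mvar_neq1 | split => // P].
  rewrite addmE => /(minprime_sym_idealP m (exchange_systemU1 j DDex)) [D].
  rewrite inE => /andP[DD_D _] [wD ->].
  by apply/(minprime_sym_idealP m DDex); exists D.
- by rewrite supp_mvar cards1.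
- rewrite colon_sym_ideal //; apply: IHN => //.
  exact: leq_trans (sym_measure_colon DDex j_free j_min colon_proper) ltN.
Qed.

End MonomialIdeals.

Section MatroidFacets.

Variables (n : nat) (D : {set {set 'I_n}}).
Hypothesis Dmat : matroid_complex D.
Implicit Types (A F G : {set 'I_n}).

Lemma facet_mem_max F : facet D F -> F \in D /\ {in D, forall G, F \subset G -> G = F}.
Proof.
move=> /andP[FD /forall_inP Fmax]; split=> // G GD FG.
by apply/eqP; move/implyP: (Fmax G GD); apply.
Qed.

Lemma facet_max F G : facet D F -> G \in D -> #|G| <= #|F|.
Proof.
have [_ [_ aug]] := Dmat.
move=> /facet_mem_max[FD Fmax] GD; rewrite leqNgt; apply/negP => /(aug _ _ FD GD)[x].
rewrite inE => /andP[xF _] /Fmax /(_ (subsetUr _ _)) xFF.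
by move: xF; rewrite -xFF setU11.
Qed.

Lemma facet_card F1 F2 : facet D F1 -> facet D F2 -> #|F1| = #|F2|.
Proof.
move=> fF1 fF2; apply/eqP; rewrite eqn_leq.
have [F1D _] := facet_mem_max fF1; have [F2D _] := facet_mem_max fF2.
by rewrite (facet_max fF2 F1D) (facet_max fF1 F2D).
Qed.

Lemma facet_of_card F A : facet D F -> A \in D -> #|A| = #|F| -> facet D A.
Proof.
move=> fF AD cardA; apply/andP; split=> //; apply/forall_inP => G GD.
by apply/implyP => AG; rewrite eq_sym eqEcard AG cardA (facet_max fF GD).
Qed.

Lemma facet_exchange F1 F2 y : facet D F1 -> facet D F2 -> y \in F1 :\: F2 ->
  exists2 x, x \in F2 :\: F1 & facet D (x |: (F1 :\ y)).
Proof.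
have [_ [hered aug]] := Dmat.
move=> fF1 fF2; rewrite inE => /andP[yF2 yF1].
have F1yD : F1 :\ y \in D by apply: hered (proj1 (facet_mem_max fF1)) (subsetDl _ _).
have cardF1 : #|F1| = #|F1 :\ y|.+1 by rewrite (cardsD1 y F1) yF1.
have [|x] := aug _ _ F1yD (proj1 (facet_mem_max fF2)).
  by rewrite -(facet_card fF1 fF2) cardF1.
rewrite inE => /andP[xF1y xF2] xD.
have xy : x != y by apply: contraNneq yF2 => <-.
have xF1 : x \notin F1 by move: xF1y; rewrite !inE xy.
exists x; first by rewrite inE xF1.
by apply: facet_of_card fF1 xD _; rewrite cardsU1 xF1y cardF1 add1n.
Qed.

Lemma exists_facet : exists F, facet D F.
Proof.
have [D0 _] := Dmat.
have [F FD Fmax] := arg_maxnP (fun F : {set 'I_n} => #|F|) D0.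
exists F; apply/andP; split=> //; apply/forall_inP => G GD.
by apply/implyP => FG; rewrite eq_sym eqEcard FG; apply: Fmax.
Qed.

Lemma exchange_system_cofacets : exchange_system [set X | facet D (~: X)] set0.
Proof.
split.
- by move=> D1 D2; rewrite !inE => fD1 fD2; rewrite cardsCs (facet_card fD1 fD2) -cardsCs.
- by move=> X _; rewrite sub0set.
- move=> D1 D2; rewrite !inE => fD1 fD2 y yD.
  have [|x] := facet_exchange fD1 fD2 (y := y); first by move: yD; rewrite !inE negbK andbC.
  rewrite !inE negbK => /andP[xD1 xD2] fx; exists x; first by rewrite inE xD1 xD2.
  rewrite inE; suff -> : ~: (y |: (D1 :\ x)) = x |: (~: D1 :\ y) by [].
  have yD1 : y \notin D1 by move: yD; rewrite inE => /andP[].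
  apply/setP => z; rewrite !inE.
  have [->|zx] := eqVneq z x; first by rewrite xD1 orbF; apply: contraNneq yD1 => <-.
  by have [->|zy] := eqVneq z y; rewrite ?yD1 // andbT negbK.
Qed.

End MatroidFacets.

Lemma symb_power_sym_ideal n (D : {set {set 'I_n}}) m :
  symb_power D m = sym_ideal [set X | facet D (~: X)] set0 (mon1 n) m.
Proof.
apply: mideal_ext => v; rewrite /sym_ideal mmulm1.
split=> [symb_v | [/exists_inP[c] | /forall_inP Iv F fF]].
- by right; apply/forall_inP => X; rewrite inE => /symb_v; rewrite /in_primepow setCK.
- by rewrite inE.
- by apply: Iv; rewrite inE setCK.
Qed.

Theorem theorem5p5 (n : nat) (D : {set {set 'I_n}}) (m : nat) :
  matroid_complex D -> 1 <= m -> kclean 0 (symb_power D m).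
Proof.
move=> Dmat m_gt0; rewrite symb_power_sym_ideal.
apply: kclean_sym_ideal; first exact: exchange_system_cofacets.
have [F fF] := exists_facet Dmat.
apply/proper_sym_ideal; exists (~: F); first by rewrite inE setCK.
by rewrite /deg_on big1 // => i _; rewrite ffunE.
Qed.
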